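(* Let $p$ be a prime, $q$ a power of $p$, $m \in \mathbb{N}$, and $c_1,\dots,c_m \in \mathbb{N}$ with $\sum_{j=1}^m c_j < \frac{q}{2}$. Then the set $B(q; c_1,\dots,c_m; 1,\dots,1) = \{ \sum_{j=1}^m c_j q^{n_j} : n_1,\dots,n_m \in \mathbb{N}_0\}$ is an $\overline{\mathbb{F}_p}(t)$-DML set over split torus.
   Context: For a field $K$ and a quasi-projective variety $X$ over $K$, a set $S \subseteq \mathbb{N}_0$ is a $K$-DML set over $X$ if there exist an endomorphism $\Phi$ of $X$ (a morphism $X \to X$ defined over $K$), a point $\alpha \in X(K)$ and a closed subvariety $V \subseteq X$ defined over $K$ (not necessarily irreducible) such that $S = \{ n \in \mathbb{N}_0 : \Phi^n(\alpha) \in V(K)\}$. $S$ is a $K$-DML set over split torus if it is a $K$-DML set over $\mathbb{G}_m^k$ for some $k \in \mathbb{N}$. *)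

From HB Require Import structures.
From mathcomp Require Import all_boot all_order all_algebra.
From mathcomp Require Import mpoly.
Set Implicit Arguments. Unset Strict Implicit. Unset Printing Implicit Defensive.
Import Order.TTheory GRing.Theory Num.Theory.
Local Open Scope ring_scope.

Definition torus_point (K : fieldType) (k : nat) (x : 'I_k -> K) : Prop :=
  forall i, x i != 0.

(* A Laurent polynomial in K[x_1^{+-1},...,x_k^{+-1}] is written P / x^e with
   P a polynomial and e an exponent vector; its value at a torus point x. *)
Definition laurent_eval (K : fieldType) (k : nat)
    (P : {mpoly K[k]}) (e : 'X_{1..k}) (x : 'I_k -> K) : K :=
  P.@[x] / ('X_[e] : {mpoly K[k]}).@[x].

(* P / x^e is a unit of the Laurent polynomial ring:
   there is Q / x^d with (P / x^e) * (Q / x^d) = 1, i.e. P * Q = x^(e+d). *)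
Definition laurent_unit (K : fieldType) (k : nat)
    (P : {mpoly K[k]}) (e : 'X_{1..k}) : Prop :=
  exists (Q : {mpoly K[k]}) (d : 'X_{1..k}), P * Q = 'X_[(e + d)%MM].

(* An endomorphism of G_m^k over K corresponds to a K-algebra endomorphism of
   K[x^{+-1}], i.e. to a k-tuple of units (P_i / x^{e_i}) of K[x^{+-1}];
   we record it by its data and its action on K-points. *)
Definition torus_endo_map (K : fieldType) (k : nat)
    (P : 'I_k -> {mpoly K[k]}) (e : 'I_k -> 'X_{1..k}) (x : 'I_k -> K) : 'I_k -> K :=
  fun i => laurent_eval (P i) (e i) x.

Definition torus_endo (K : fieldType) (k : nat)
    (P : 'I_k -> {mpoly K[k]}) (e : 'I_k -> 'X_{1..k}) : Prop :=
  forall i, laurent_unit (P i) (e i).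

(* S is a K-DML set over G_m^k: there are an endomorphism Phi, a point
   alpha in G_m^k(K), and a closed subvariety V of G_m^k over K (the zero locus
   in the torus of a finite family F of polynomials over K) with
   S = { n | Phi^n(alpha) \in V(K) }. *)
Definition DML_set_over_torus (K : fieldType) (k : nat) (S : nat -> Prop) : Prop :=
  exists (P : 'I_k -> {mpoly K[k]}) (e : 'I_k -> 'X_{1..k})
         (alpha : 'I_k -> K) (F : seq {mpoly K[k]}),
    torus_endo P e /\ torus_point alpha /\
    forall n : nat,
      S n <-> (forall f, f \in F -> f.@[iter n (torus_endo_map P e) alpha] = 0).

Definition DML_set_over_split_torus (K : fieldType) (S : nat -> Prop) : Prop :=
  exists k : nat, (0 < k)%N /\ DML_set_over_torus K k S.

Definition is_alg_closure_Fp (p : nat) (L : closedFieldType) : Prop :=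
  p \in [pchar L] /\
  forall x : L, exists Pp : {poly 'F_p},
    Pp != 0 /\ root (map_poly (fun a : 'F_p => (nat_of_ord a)%:R : L) Pp) x.

Definition Bset (q m : nat) (c : 'I_m -> nat) (s : nat) : Prop :=
  exists ns : 'I_m -> nat, s = (\sum_(j < m) c j * q ^ ns j)%N.

From HB Require Import structures.
From mathcomp Require Import all_boot all_order all_algebra.
From mathcomp Require Import mpoly separable fingroup perm zify.
Set Implicit Arguments. Unset Strict Implicit. Unset Printing Implicit Defensive.
Import Order.TTheory GRing.Theory Num.Theory.
Local Open Scope ring_scope.

(* Let K = L(t), q = p^r, and let a range over F_q inside L. The endomorphism
   x_a |-> (t + a) x_a of G_m^q, started at (1, ..., 1), reaches the point
   y_a = (t + a)^n after n steps. If n = sum_(e in E) q^e, Frobenius gives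
   (t + a)^n = P_E(a) for P_E = prod_(e in E) (X + t^(q^e)), and when
   |E| < q - 1 each coefficient of P_E is a linear form in the y_a
   (interpolation on F_q through the power sums of its elements). Take for E
   the base-q digits of n. By Lucas' theorem the forms of index in (C, q - 1],
   C = sum_j c_j, cannot all vanish when the digit sum of n exceeds C, so the
   linear equations "these forms vanish and the C-th one is 1" say exactly
   that |E| = C. It remains to express that the roots -t^(q^e) of P_E split
   into groups of sizes c_1, ..., c_m: this is a symmetric condition on the
   roots, hence a polynomial one in the coefficients of P_E, i.e. in the y_a. *)

Section Digits.
Variable b : nat.
Hypothesis b_gt1 : (1 < b)%N.

Definition from_digits (s : seq nat) : nat := foldr (fun d v => d + b * v)%N 0%N s.

Fixpoint digits_rec (fuel n : nat) : seq nat :=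
  if fuel is fuel'.+1 then (n %% b)%N :: digits_rec fuel' (n %/ b) else [::].

(* Little-endian base-[b] expansion of [n], padded with zeros to length [n]. *)
Definition digits (n : nat) : seq nat := digits_rec n n.

Lemma digits_recK fuel n : (n <= fuel)%N -> from_digits (digits_rec fuel n) = n.
Proof.
elim: fuel n => [|f IHf] n le_nf /=; first by case: n le_nf.
rewrite IHf; first by rewrite addnC mulnC -divn_eq.
case: n le_nf => [|n] le_nf; first by rewrite div0n.
by have := ltn_Pdiv b_gt1 (ltn0Sn n); lia.
Qed.

Lemma digitsK n : from_digits (digits n) = n.
Proof. exact: digits_recK. Qed.

Lemma digits_lt n : all (fun d => d < b)%N (digits n).
Proof.
rewrite /digits; move: {2}n; elim: n => [|f IHf] n //=.
by rewrite IHf ltn_pmod // ltnW.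
Qed.

Lemma from_digits_modpred s : from_digits s = sumn s %[mod b.-1].
Proof.
elim: s => [|d s IHs] //=.
rewrite -[in RHS]modnDmr -IHs [in RHS]modnDmr.
by rewrite -{1}(prednK (ltnW b_gt1)) mulSnr addnCA mulnC modnMDl.
Qed.

Lemma sumn_le_from_digits s : (sumn s <= from_digits s)%N.
Proof. by elim: s => [|d s IHs] //=; rewrite leq_add2l; nia. Qed.

(* [i] occurs [s_i] times. *)
Definition digit_exponents (s : seq nat) : seq nat :=
  foldr (fun d E => nseq d 0%N ++ map succn E) [::] s.

Lemma size_digit_exponents s : size (digit_exponents s) = sumn s.
Proof. by elim: s => [|d s IHs] //=; rewrite size_cat size_nseq size_map IHs. Qed.

Lemma sum_digit_exponents s : (\sum_(e <- digit_exponents s) b ^ e)%N = from_digits s.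
Proof.
elim: s => [|d s IHs] /=; first by rewrite big_nil.
rewrite big_cat big_map big_nseq /= iter_addn_0 expn0 mul1n -IHs big_distrr /=.
by under eq_bigr do rewrite expnS.
Qed.

End Digits.

Definition subdigits (s t : seq nat) : bool := all2 (fun d e => (e == 0) || (e == d))%N s t.

Lemma subdigits_refl s : subdigits s s.
Proof. by elim: s => //= d s ->; rewrite eqxx orbT. Qed.

Lemma subdigits0 s : subdigits s (nseq (size s) 0%N).
Proof. by elim: s. Qed.

Lemma exists_subdigits (b C : nat) (s : seq nat) :
  (2 * C < b)%N -> all (fun d => d < b)%N s -> (C < sumn s)%N ->
  exists2 t, subdigits s t & (C < sumn t < b)%N.
Proof.
move=> C_lt; elim: s => [|d s IHs] //= /andP[d_lt s_lt] C_lt_sum.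
have [C_lt_s | s_le_C] := ltnP C (sumn s).
  by have [t st Ct] := IHs s_lt C_lt_s; exists (0%N :: t).
have [C_lt_d | d_le_C] := ltnP C d.
  exists (d :: nseq (size s) 0%N); first by rewrite /= eqxx orbT subdigits0.
  by rewrite /= sumn_nseq mul0n addn0 C_lt_d.
by exists (d :: s); [rewrite /= eqxx orbT subdigits_refl | rewrite /=; lia].
Qed.

Lemma sum_coef_if (R : nzSemiRingType) (P : {poly R}) (k : nat) (x : R) :
  \sum_(i < size P) P`_i * (if i == k :> nat then x else 0) = P`_k * x.
Proof.
have [lt_kP | le_Pk] := ltnP k (size P).
  rewrite (bigD1 (Ordinal lt_kP)) //= eqxx big1 ?addr0 // => i /eqP ne_ik.
  by rewrite ifN ?mulr0 //; apply/eqP => eq_ik; apply: ne_ik; exact: val_inj.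
rewrite (nth_default _ le_Pk) mul0r big1 // => i _.
by rewrite ifN ?mulr0 // neq_ltn (leq_trans _ le_Pk).
Qed.

Lemma coefM_comp_polyXn (R : comNzSemiRingType) (P Q : {poly R}) (n c d : nat) :
  (size P <= n)%N -> (c < n)%N -> (P * (Q \Po 'X^n))`_(c + n * d) = P`_c * Q`_d.
Proof.
move=> size_P c_lt; rewrite comp_polyE mulr_sumr coef_sum.
have coefPX i : (P * 'X^n ^+ i)`_(c + n * d) = if i == d then P`_c else 0.
  rewrite -exprM coefMXn; case: (ltngtP i d) => [lt_id|lt_di|->].
  - have := leq_mul (leqnn n) lt_id; rewrite mulnS => le_nid.
    by rewrite ifF ?nth_default //; [apply: leq_trans size_P _; lia | apply/negbTE; lia].
  - have := leq_mul (leqnn n) lt_di; rewrite mulnS => le_ndi.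
    by rewrite ifT //; lia.
  - by rewrite ltnNge leq_addl addnK.
have coefPQ i : (P * (Q`_i *: 'X^n ^+ i))`_(c + n * d) = Q`_i * (if i == d then P`_c else 0).
  by rewrite -scalerAr coefZ coefPX.
under eq_bigr => i _ do rewrite coefPQ.
by rewrite sum_coef_if mulrC.
Qed.

Lemma coef_XaddC_exp (R : comNzRingType) (a : R) (n k : nat) :
  (('X + a%:P) ^+ n)`_k = a ^+ (n - k) *+ 'C(n, k).
Proof.
rewrite addrC exprDn; under eq_bigr do rewrite -rmorphXn mul_polyC scalerMnl.
rewrite -(poly_def n.+1 (fun i => a ^+ (n - i) *+ 'C(n, i))) coef_poly.
by case: ltnP => // le_nk; rewrite bin_small.
Qed.

Section Lucas.
Variables (R : comNzRingType) (p r : nat).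
Hypothesis pR : p \in [pchar R].
Local Notation q := (p ^ r)%N.

Lemma q_gt1 : (0 < r)%N -> (1 < q)%N.
Proof. by move=> r_gt0; rewrite -(exp1n r) ltn_exp2r // prime_gt1 // (pcharf_prime pR). Qed.

Lemma lucas_pchar (a b c d : nat) : (a < q)%N -> (c < q)%N ->
  'C(a + q * b, c + q * d)%:R = ('C(a, c) * 'C(b, d))%:R :> R.
Proof.
move=> a_lt c_lt.
have pRX : p \in [pchar {poly R}] by rewrite (rmorph_pchar polyC).
have Frobenius : ('X + 1) ^+ q = 'X^q + 1 :> {poly R}.
  by rewrite exprDn_pchar ?expr1n // pnatX pnatE ?(pcharf_prime pRX) ?pRX.
have expand : ('X + 1) ^+ (a + q * b) = ('X + 1) ^+ a * (('X + 1) ^+ b \Po 'X^q) :> {poly R}.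
  by rewrite exprD exprM Frobenius rmorphXn /= comp_polyD comp_polyX comp_polyC.
have size_Xadd1_exp : (size (('X + 1) ^+ a : {poly R}) <= q)%N.
  by apply: leq_trans (size_poly_exp_leq _ _) _; rewrite size_XaddC mul1n.
have coef_Xadd1_exp n k : (('X + 1) ^+ n : {poly R})`_k = 'C(n, k)%:R.
  by rewrite -polyC1 coef_XaddC_exp expr1n.
by rewrite -coef_Xadd1_exp expand coefM_comp_polyXn // natrM !coef_Xadd1_exp.
Qed.

Lemma lucas_subdigits (s t : seq nat) : all (fun d => d < q)%N s -> subdigits s t ->
  'C(from_digits q s, from_digits q t)%:R = 1 :> R.
Proof.
elim: s t => [|d s IHs] [|e t] //= /andP[d_lt s_lt] /andP[e_d st].
have e_lt : (e < q)%N by apply: leq_ltn_trans d_lt; case/orP: e_d => /eqP ->.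
rewrite lucas_pchar // natrM IHs // mulr1.
by case/orP: e_d => /eqP ->; rewrite ?bin0 ?binn.
Qed.

Lemma exists_binomial_digit_window n C : (0 < r)%N -> (2 * C < q)%N ->
  (C < sumn (digits q n))%N ->
  exists N j, [/\ 'C(n, N)%:R = 1 :> R, (N <= n)%N, (C < j <= q.-1)%N, (j <= N)%N
                & (q.-1 %| N - j)%N].
Proof.
move=> r_gt0 C_lt C_lt_digits; have q_gt1 := q_gt1 r_gt0.
have [t sub_t /andP[C_lt_t t_lt]] := exists_subdigits C_lt (digits_lt q_gt1 n) C_lt_digits.
have binom_t : 'C(n, from_digits q t)%:R = 1 :> R.
  by rewrite -{1}(digitsK q_gt1 n) lucas_subdigits // digits_lt.
exists (from_digits q t), (sumn t); split=> //.
- rewrite leqNgt; apply: contra_eqN binom_t => /bin_small ->.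
  by rewrite eq_sym oner_eq0.
- by rewrite C_lt_t -ltnS prednK // ltnW.
- exact: sumn_le_from_digits.
by rewrite -eqn_mod_dvd ?sumn_le_from_digits //; apply/eqP; exact: from_digits_modpred.
Qed.

End Lucas.

Definition Fq_enum (L : nzRingType) (q : nat) (A : seq L) : Prop :=
  [/\ uniq A, size A = q & forall a, (a \in A) = (a ^+ q == a)].

Section FiniteField.
Variables (L : fieldType) (p r : nat).
Hypotheses (pL : p \in [pchar L]) (r_gt0 : (0 < r)%N).
Local Notation q := (p ^ r)%N.

Lemma natr_q : q%:R = 0 :> L.
Proof. by rewrite natrX (pcharf0 pL) expr0n eqn0Ngt r_gt0. Qed.

Variable A : seq L.
Hypothesis A_Fq : Fq_enum q A.

Lemma Fq_enum0 : 0 \in A.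
Proof. by case: A_Fq => _ _ ->; rewrite expr0n gtn_eqF // ltnW // (q_gt1 pL r_gt0). Qed.

Lemma Fq_enum_unit a : a \in A -> a != 0 -> a ^+ q.-1 = 1.
Proof.
case: A_Fq => _ _ -> /eqP a_q a_neq0; apply: (mulIf a_neq0).
by rewrite mul1r -exprSr prednK // ltnW // (q_gt1 pL r_gt0).
Qed.

Lemma Fq_enum_exp_pow a e : a \in A -> a ^+ (q ^ e) = a.
Proof.
case: A_Fq => _ _ memA; rewrite memA => /eqP a_q.
by elim: e => [|e IHe]; rewrite ?expr1 // expnSr exprM IHe a_q.
Qed.

Lemma Fq_enum_mul a b : a \in A -> b \in A -> a * b \in A.
Proof. by case: A_Fq => _ _ memA; rewrite !memA exprMn => /eqP -> /eqP ->. Qed.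

Lemma size_rem0_Fq_enum : size (rem 0 A) = q.-1.
Proof. by case: A_Fq => _ size_A _; rewrite size_rem ?Fq_enum0 // size_A. Qed.

Lemma mem_rem0_Fq_enum a : (a \in rem 0 A) = (a != 0) && (a \in A).
Proof. by case: A_Fq => uniq_A _ _; rewrite mem_rem_uniq // inE. Qed.

Lemma exists_Fq_exp_neq1 e : ~~ (q.-1 %| e)%N -> exists2 b, b \in rem 0 A & b ^+ e != 1.
Proof.
move=> ndvd_e; apply/hasP; apply: contraNT ndvd_e; rewrite -all_predC => /allP all_e1.
apply/negPn/negP; rewrite /dvdn -lt0n; set e' := (e %% q.-1)%N => e'_gt0.
have e'_lt : (e' < q.-1)%N by rewrite ltn_pmod // -subn1 subn_gt0 (q_gt1 pL r_gt0).
have roots_e' : all (root ('X^e' - 1)) (rem 0 A).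
  apply/allP => b b_rem; move: (b_rem); rewrite mem_rem0_Fq_enum => /andP[b_neq0 b_A].
  have /negPn/eqP be1 := all_e1 b b_rem.
  rewrite /root !hornerE subr_eq0; apply/eqP.
  by rewrite -be1 [in RHS](divn_eq e q.-1) exprD mulnC exprM Fq_enum_unit // expr1n mul1r.
have uniq_rem : uniq (rem 0 A) by case: A_Fq => uniq_A _ _; exact: rem_uniq.
have XnsubC_neq0 : 'X^e' - 1 != 0 :> {poly L} by rewrite -size_poly_eq0 size_XnsubC.
have := max_poly_roots XnsubC_neq0 roots_e' uniq_rem.
by rewrite size_XnsubC // size_rem0_Fq_enum ltnS leqNgt e'_lt.
Qed.

Lemma Fq_enum_mulr_perm b : b \in A -> b != 0 -> perm_eq (map ( *%R b) A) A.
Proof.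
case: A_Fq => uniq_A _ _ b_A b_neq0.
have uniq_bA : uniq (map ( *%R b) A) by rewrite map_inj_uniq //; exact: mulfI.
have sub_bA : {subset map ( *%R b) A <= A} by move=> _ /mapP[a a_A ->]; exact: Fq_enum_mul.
have [_ eq_bA] := uniq_min_size uniq_bA sub_bA (eq_leq (esym (size_map _ _))).
exact: uniq_perm.
Qed.

Lemma sum_Fq_exp e : \sum_(a <- A) a ^+ e = if ((0 < e) && (q.-1 %| e))%N then -1 else 0.
Proof.
have [_ size_A _] := A_Fq; have q_gt1 := q_gt1 pL r_gt0.
case: e => [|e] /=.
  rewrite (eq_bigr (fun=> 1)) // big_const_seq count_predT iter_addr_0.
  by rewrite size_A natr_q.
case: ifP => [dvd_e | /negbT ndvd_e].
  rewrite (perm_big _ (perm_to_rem Fq_enum0)) big_cons expr0n /= add0r.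
  rewrite (eq_big_seq (fun=> 1)) => [|a]; last first.
    rewrite mem_rem0_Fq_enum => /andP[a_neq0 a_A]; case/dvdnP: dvd_e => k ->.
    by rewrite mulnC exprM Fq_enum_unit // expr1n.
  rewrite big_const_seq count_predT iter_addr_0 size_rem0_Fq_enum -subn1 natrB ?natr_q ?sub0r //.
  exact: ltnW.
have [b b_rem be_neq1] := exists_Fq_exp_neq1 ndvd_e.
move: b_rem; rewrite mem_rem0_Fq_enum => /andP[b_neq0 b_A].
set S := \sum_(a <- A) a ^+ e.+1.
have S_scaled : S = b ^+ e.+1 * S.
  rewrite /S -[LHS](perm_big _ (Fq_enum_mulr_perm b_A b_neq0)) big_map mulr_sumr.
  by apply: eq_bigr => a _; rewrite exprMn.
have : (1 - b ^+ e.+1) * S = 0 by rewrite mulrBl mul1r -S_scaled subrr.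
by move/eqP; rewrite mulf_eq0 subr_eq0 eq_sym (negbTE be_neq1) => /eqP.
Qed.

End FiniteField.

Lemma exists_Fq_enum (L : closedFieldType) (p r : nat) : p \in [pchar L] -> (0 < r)%N ->
  exists A : seq L, Fq_enum (p ^ r) A.
Proof.
move=> pL r_gt0; set q := (p ^ r)%N; have q_gt1 := q_gt1 pL r_gt0.
pose P : {poly L} := 'X^q - 'X.
have size_P : size P = q.+1 by rewrite size_polyDl ?size_polyXn // size_polyN size_polyX.
have monic_P : P \is monic.
  by rewrite monicE lead_coefDl ?lead_coefXn // size_polyN size_polyX size_polyXn.
have [A P_roots] := closed_field_poly_normal P.
rewrite (monicP monic_P) scale1r in P_roots.
exists A; split.
- rewrite -separable_prod_XsubC -P_roots unlock derivB derivXn derivX.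
  rewrite -mulr_natr -polyC_natr natr_q // polyC0 mulr0 sub0r.
  by rewrite -scaleN1r coprimepZr ?oppr_eq0 ?oner_eq0 // coprimep1.
- by apply: succn_inj; rewrite -size_P P_roots size_prod_XsubC.
- by move=> a; rewrite -root_prod_XsubC -P_roots /root !hornerE subr_eq0.
Qed.

Lemma pos_dvdn_subnD N i k : (i < N)%N -> (k <= N)%N ->
  ((0 < N - k + i) && (N %| N - k + i))%N = (i == k).
Proof.
move=> lt_iN le_kN; have [-> | ne_ik] := eqVneq i k; first by rewrite subnK // dvdnn andbT; lia.
by apply/negbTE/andP => -[pos /dvdnP[[|[|u]] eq_u]]; lia.
Qed.

Lemma coef_power_sums (R : comNzRingType) (N : nat) (B : seq R) (P : {poly R}) k :
  (forall e, \sum_(b <- B) b ^+ e = if ((0 < e) && (N %| e))%N then -1 else 0) ->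
  (size P <= N)%N -> (k <= N)%N -> P`_k = - \sum_(b <- B) b ^+ (N - k) * P.[b].
Proof.
move=> sum_B_exp size_P le_kN.
have sum_B_monomial (i : 'I_(size P)) :
    \sum_(b <- B) b ^+ (N - k) * (P`_i * b ^+ i) = P`_i * (if i == k :> nat then -1 else 0).
  rewrite -(@pos_dvdn_subnD N i k) ?(leq_trans (ltn_ord i)) // -sum_B_exp mulr_sumr.
  by apply: eq_bigr => b _; rewrite mulrCA exprD.
under eq_bigr do rewrite horner_coef mulr_sumr.
rewrite exchange_big /=; under eq_bigr => i _ do rewrite sum_B_monomial.
by rewrite sum_coef_if mulrN1 opprK.
Qed.

Section SymmetricEval.
Variables (F : fieldType) (C : nat).

Lemma coef_prod_XsubC_mesym (v : 'I_C -> F) (i : 'I_C) :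
  (\prod_(j < C) ('X - (v j)%:P))`_(C - i.+1) = (-1) ^+ i.+1 * (mesym C F i.+1).@[v].
Proof.
have := mroots_coeff [tuple v j | j < C] (lift ord0 i).
rewrite big_tuple /bump /= (meval_eq _ (tnth_mktuple v)).
by under eq_bigr do rewrite tnth_mktuple.
Qed.

Lemma meval_sym_fundamental (S : {mpoly F[C]}) (S_sym : S \is symmetric) (v : 'I_C -> F) :
  S.@[v] = (sval (sym_fundamental S_sym)).@[fun i =>
             (-1) ^+ i.+1 * (\prod_(j < C) ('X - (v j)%:P))`_(C - i.+1)].
Proof.
case: (sym_fundamental S_sym) => Q [QS _] /=; rewrite -[in LHS]QS comp_mpoly_meval.
apply: meval_eq => i; rewrite tnth_mktuple coef_prod_XsubC_mesym.
by rewrite mulrA -exprMn mulrNN mulr1 expr1n mul1r.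
Qed.

Lemma msymXU (s : 'S_C) (i : 'I_C) : msym s ('X_i : {mpoly F[C]}) = 'X_(s i).
Proof.
rewrite msymX; congr 'X_[_]; apply/mnmP => j.
by rewrite mnmE !mnm1E (canF_eq (permK s)).
Qed.

Lemma msymC (s : 'S_C) (x : F) : msym s (x%:MP : {mpoly F[C]}) = x%:MP.
Proof. by rewrite -alg_mpolyC msymZ msym1. Qed.

End SymmetricEval.

Lemma size_prod_leq_uniform (R : nzSemiRingType) (I : finType) (F : I -> {poly R}) d :
  (forall i, size (F i) <= d.+1)%N -> (size (\prod_i F i)%R <= (#|I| * d).+1)%N.
Proof.
move=> size_F; apply: leq_trans (size_poly_prod_leq _ _) _.
set S := (\sum_(i | _) _)%N.
have : (S <= \sum_(i : I) d.+1)%N by apply: leq_sum => i _; exact: size_F.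
have card_I : #|(xpredT : pred I)| = #|I| by [].
by rewrite sum_nat_const card_I mulnS; lia.
Qed.

Section MultiplicityPattern.
Variables (F : fieldType) (m : nat) (c : 'I_m -> nat) (C : nat).
Local Notation pattern := {ffun 'I_m -> 'I_C}.

(* Vanishes at [v] iff [prod_i (tau - v_i) = prod_j (tau - v_(pi j)) ^ c_j] for some [pi];
   vanishing for enough values of [tau] forces this identity of polynomials in [tau]. *)
Definition pattern_poly (tau : F) : {mpoly F[C]} :=
  \prod_(pi : pattern)
    (\prod_(i < C) (tau%:MP - 'X_i) - \prod_(j < m) (tau%:MP - 'X_(pi j)) ^+ c j).

Lemma pattern_poly_sym tau : pattern_poly tau \is symmetric.
Proof.
apply/issymP => s; rewrite rmorph_prod /=.
pose spi (pi : pattern) : pattern := [ffun j => s (pi j)].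
have spi_inj : injective spi.
  by move=> pi1 pi2 /ffunP eq_s; apply/ffunP => j; have := eq_s j; rewrite !ffunE => /perm_inj.
rewrite [RHS](reindex_inj spi_inj); apply: eq_bigr => pi _; rewrite rmorphB /= !rmorph_prod /=.
congr (_ - _).
  rewrite [RHS](reindex_perm s); apply: eq_bigr => i _.
  by rewrite rmorphB /= msymC msymXU.
by apply: eq_bigr => j _; rewrite rmorphXn rmorphB /= msymC msymXU ffunE.
Qed.

Lemma pattern_poly_meval tau (v : 'I_C -> F) : (pattern_poly tau).@[v] =
  \prod_(pi : pattern) (\prod_(i < C) (tau - v i) - \prod_(j < m) (tau - v (pi j)) ^+ c j).
Proof.
rewrite rmorph_prod; apply: eq_bigr => pi _.
rewrite rmorphB !rmorph_prod; congr (_ - _); apply: eq_bigr => i _.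
  by rewrite rmorphB /= mevalC mevalXU.
by rewrite rmorphXn rmorphB /= mevalC mevalXU.
Qed.

Lemma size_prod_XsubC_exp (w : 'I_m -> F) :
  size (\prod_(j < m) ('X - (w j)%:P) ^+ c j) = (\sum_(j < m) c j).+1.
Proof.
rewrite size_prod => [|j _]; last by rewrite expf_neq0 // polyXsubC_eq0.
under eq_bigr do rewrite size_exp_XsubC -addn1.
by rewrite big_split /= sum1_card card_ord; lia.
Qed.

Lemma pattern_poly_roots (v : 'I_C -> F) (T : seq F) :
  (\sum_(j < m) c j)%N = C -> uniq T -> (#|pattern| * C < size T)%N ->
  (forall tau, tau \in T -> (pattern_poly tau).@[v] = 0) ->
  exists pi : pattern, \prod_(i < C) ('X - (v i)%:P) = \prod_(j < m) ('X - (v (pi j))%:P) ^+ c j.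
Proof.
move=> sum_c uniq_T size_T T_roots.
set P := \prod_(i < C) ('X - (v i)%:P).
pose P_ (pi : pattern) := \prod_(j < m) ('X - (v (pi j))%:P) ^+ c j.
have [/existsP[pi /eqP eq_pi] | no_pi] := boolP [exists pi, P == P_ pi]; first by exists pi.
exfalso; pose Q := \prod_(pi : pattern) (P - P_ pi).
have Q_neq0 : Q != 0.
  apply/prodf_neq0 => pi _; rewrite subr_eq0; apply: contra no_pi => eq_pi.
  by apply/existsP; exists pi.
have Q_roots : all (root Q) T.
  apply/allP => tau T_tau; rewrite /root /Q horner_prod -(T_roots tau T_tau) pattern_poly_meval.
  apply/eqP/eq_bigr => pi _; rewrite hornerD hornerN !horner_prod.
  by congr (_ - _); apply: eq_bigr => i _; rewrite ?horner_exp !hornerE.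
have size_Q : (size Q <= (#|pattern| * C).+1)%N.
  apply: size_prod_leq_uniform => pi; apply: leq_trans (size_polyD _ _) _.
  rewrite size_polyN size_prod_XsubC size_prod_XsubC_exp sum_c.
  by rewrite [index_enum _]unlock -enumT size_enum_ord maxnn.
by have := leq_trans (max_poly_roots Q_neq0 Q_roots uniq_T) size_Q; rewrite ltnS leqNgt size_T.
Qed.

End MultiplicityPattern.

Section TorusOrbit.
Variables (L : fieldType) (p r : nat) (A : seq L).
Hypotheses (pL : p \in [pchar L]) (r_gt0 : (0 < r)%N) (A_Fq : Fq_enum (p ^ r) A).
Local Notation q := (p ^ r)%N.
Local Notation K := {fraction {poly L}}.
Local Notation tofrac := (@FracField.tofrac _).
Local Notation "a %:K" := (tofrac a%:P) (at level 2, format "a %:K").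

Definition tvar : K := tofrac 'X.

Lemma tvar_addC_neq0 a : tvar + a%:K != 0.
Proof. by rewrite /tvar -rmorphD tofrac_eq0 -size_poly_eq0 size_XaddC. Qed.

Lemma tvarX_inj : injective (fun i => tvar ^+ i).
Proof.
move=> i j /eqP; rewrite /tvar -!rmorphXn tofrac_eq => /eqP eq_ij.
by have := congr1 (fun P : {poly L} => size P) eq_ij; rewrite /= !size_polyXn => -[].
Qed.

Lemma Frobenius_Fq (x : K) a e : a \in A -> (x + a%:K) ^+ (q ^ e) = x ^+ (q ^ e) + a%:K.
Proof.
have pK : p \in [pchar K] by apply: (rmorph_pchar tofrac); apply: (rmorph_pchar polyC).
move=> a_A; rewrite exprDn_pchar; first by rewrite -!rmorphXn (Fq_enum_exp_pow A_Fq).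
by rewrite -expnM pnatX pnatE ?(pcharf_prime pK) ?pK.
Qed.

Definition exp_poly (E : seq nat) : {poly K} := \prod_(e <- E) ('X - (- tvar ^+ (q ^ e))%:P).

Lemma size_exp_poly E : size (exp_poly E) = (size E).+1.
Proof. exact: size_prod_XsubC. Qed.

Lemma monic_exp_poly E : exp_poly E \is monic.
Proof. exact: monic_prod_XsubC. Qed.

Lemma exp_poly_Fq E a : a \in A -> (exp_poly E).[a%:K] = (tvar + a%:K) ^+ (\sum_(e <- E) q ^ e).
Proof.
move=> a_A; rewrite horner_prod -prodrXr; apply: eq_bigr => e _.
by rewrite hornerXsubC opprK Frobenius_Fq // addrC.
Qed.

Definition orbit (n : nat) : 'I_q -> K := fun i => (tvar + (A`_i)%:K) ^+ n.

(* Evaluated at [orbit n], this is the coefficient of [X ^ k] in the polynomial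
   of degree < q - 1 taking the value [orbit n i] at [A`_i] (see [coef_power_sums]). *)
Definition coef_form (k : nat) : {mpoly K[q]} :=
  - \sum_(i < q) ((A`_i)%:K ^+ (q.-1 - k)) *: 'X_i.

Lemma coef_form_orbit k n :
  (coef_form k).@[orbit n] = - \sum_(a <- A) a%:K ^+ (q.-1 - k) * (tvar + a%:K) ^+ n.
Proof.
rewrite mevalN (raddf_sum (meval (orbit n))) (big_nth 0); case: A_Fq => _ -> _.
by rewrite big_mkord; congr (- _); apply: eq_bigr => i _ /=; rewrite mevalZ mevalXU.
Qed.

Lemma sum_FqK_exp e : \sum_(b <- map (fun a => a%:K) A) b ^+ e =
  if ((0 < e) && (q.-1 %| e))%N then -1 else 0.
Proof.
rewrite big_map (eq_bigr (fun a => (a ^+ e)%:K)) => [|a _]; last by rewrite !rmorphXn.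
rewrite -!rmorph_sum (sum_Fq_exp pL r_gt0 A_Fq).
by case: ifP; rewrite ?rmorphN ?rmorph1 ?rmorph0.
Qed.

Lemma coef_form_orbit_exp_poly E k : (size E < q.-1)%N -> (k <= q.-1)%N ->
  (coef_form k).@[orbit (\sum_(e <- E) q ^ e)] = (exp_poly E)`_k.
Proof.
move=> size_E le_kq.
rewrite (coef_power_sums sum_FqK_exp) ?size_exp_poly // coef_form_orbit big_map.
by congr (- _); apply: eq_big_seq => a a_A; rewrite exp_poly_Fq.
Qed.

Lemma coef_form_orbit_neq0 n C : (2 * C < q)%N -> (C < sumn (digits q n))%N ->
  exists2 k, (C < k <= q.-1)%N & (coef_form k).@[orbit n] != 0.
Proof.
move=> C_lt C_lt_digits; have q_gt1 := q_gt1 pL r_gt0.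
have [N [j [binom_N le_Nn j_in le_jN dvd_Nj]]] :=
  exists_binomial_digit_window pL r_gt0 C_lt C_lt_digits.
exists j => //.
pose Psi : {poly L} := - \sum_(a <- A) (a ^+ (q.-1 - j))%:P * ('X + a%:P) ^+ n.
have -> : (coef_form j).@[orbit n] = tofrac Psi.
  rewrite coef_form_orbit /Psi rmorphN rmorph_sum; congr (- _); apply: eq_bigr => a _.
  by rewrite rmorphM /= !rmorphXn /= rmorphD.
have coef_Psi : Psi`_(n - N) = 1.
  rewrite /Psi coefN coef_sum.
  under eq_bigr do rewrite coefCM coef_XaddC_exp subKn // mulrnAr -exprD.
  rewrite sumrMnl (sum_Fq_exp pL r_gt0 A_Fq) bin_sub //.
  have -> : (q.-1 - j + N = q.-1 + (N - j))%N by lia.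
  have -> : ((0 < q.-1 + (N - j)) && (q.-1 %| q.-1 + (N - j)))%N.
    by rewrite (dvdn_addr _ (dvdnn _)) dvd_Nj andbT; lia.
  by rewrite mulNrn opprK binom_N.
rewrite tofrac_eq0; apply: contra_eq_neq coef_Psi => ->.
by rewrite coef0 eq_sym oner_eq0.
Qed.

Definition orbit_step (i : 'I_q) : {mpoly K[q]} := (tvar + (A`_i)%:K)%:MP * 'X_i.

Lemma orbit_step_endo : torus_endo orbit_step (fun=> 0%MM).
Proof.
move=> i; exists (((tvar + (A`_i)%:K)^-1)%:MP * 'X_i), (U_(i) + U_(i))%MM.
by rewrite add0m mpolyXD mulrACA -mpolyCM divff ?tvar_addC_neq0 // mul1r.
Qed.

Lemma orbit_step_map x i :
  torus_endo_map orbit_step (fun=> 0%MM) x i = (tvar + (A`_i)%:K) * x i.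
Proof. by rewrite /torus_endo_map /laurent_eval mpolyX0 meval1 divr1 mevalM mevalC mevalXU. Qed.

Lemma iter_orbit_step n : iter n (torus_endo_map orbit_step (fun=> 0%MM)) (fun=> 1) =1 orbit n.
Proof.
elim: n => [|n IHn] i; first by rewrite /orbit expr0.
by rewrite iterS orbit_step_map IHn /orbit exprS.
Qed.

Variables (m : nat) (c : 'I_m -> nat) (C : nat).
Hypothesis sum_c : (\sum_(j < m) c j)%N = C.
Local Notation pattern := {ffun 'I_m -> 'I_C}.

Definition roots_of (E : seq nat) : 'I_C -> K := fun i => - tvar ^+ (q ^ nth 0%N E i).

Lemma exp_poly_roots_of E : size E = C -> exp_poly E = \prod_(i < C) ('X - (roots_of E i)%:P).
Proof. by rewrite /exp_poly (big_nth 0%N) => ->; rewrite big_mkord. Qed.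

Definition pattern_form (tau : K) : {mpoly K[q]} :=
  sval (sym_fundamental (pattern_poly_sym c C tau))
    \mPo [tuple (-1) ^+ i.+1 *: coef_form (C - i.+1) | i < C].

Lemma pattern_form_orbit tau E : size E = C -> (C < q.-1)%N ->
  (pattern_form tau).@[orbit (\sum_(e <- E) q ^ e)] = (pattern_poly c C tau).@[roots_of E].
Proof.
move=> size_E C_lt; rewrite comp_mpoly_meval (meval_sym_fundamental (pattern_poly_sym c C tau)).
apply: meval_eq => i; rewrite tnth_mktuple mevalZ coef_form_orbit_exp_poly ?size_E //.
  by rewrite exp_poly_roots_of.
by rewrite (leq_trans (leq_subr _ _)) // ltnW.
Qed.

Definition pattern_exponents (ns : 'I_m -> nat) : seq nat :=
  flatten [seq nseq (c j) (ns j) | j <- enum 'I_m].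

Lemma size_pattern_exponents ns : size (pattern_exponents ns) = C.
Proof.
rewrite size_flatten /shape -map_comp sumnE big_map big_enum /= -sum_c.
by apply: eq_bigr => j _; rewrite size_nseq.
Qed.

Lemma sum_pattern_exponents ns :
  (\sum_(e <- pattern_exponents ns) q ^ e)%N = (\sum_(j < m) c j * q ^ ns j)%N.
Proof.
rewrite big_flatten big_map big_enum /=; apply: eq_bigr => j _.
by rewrite big_nseq iter_addn_0 mulnC.
Qed.

Lemma mem_pattern_exponents ns j : (0 < c j)%N -> ns j \in pattern_exponents ns.
Proof.
move=> c_j_gt0; apply/flattenP; exists (nseq (c j) (ns j)); last by rewrite mem_nseq c_j_gt0 eqxx.
by apply/mapP; exists j; rewrite ?mem_enum.
Qed.

Lemma prod_pattern_exponents ns (G : nat -> K) :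
  \prod_(e <- pattern_exponents ns) G e = \prod_(j < m) G (ns j) ^+ c j.
Proof.
rewrite big_flatten big_map big_enum /=; apply: eq_bigr => j _.
by rewrite big_nseq; elim: (c j) => [|k IHk] //=; rewrite IHk exprS.
Qed.

(* At [X = 0] both sides are powers of [tvar]; [tvarX_inj] compares the exponents. *)
Lemma Bset_pattern_identity E (pi : pattern) : size E = C ->
  \prod_(i < C) ('X - (roots_of E i)%:P) = \prod_(j < m) ('X - (roots_of E (pi j))%:P) ^+ c j ->
  Bset q c (\sum_(e <- E) q ^ e).
Proof.
move=> size_E /(congr1 (fun P => P.[0])); rewrite /= !horner_prod.
under eq_bigr do rewrite hornerXsubC sub0r /roots_of opprK.
under [in RHS]eq_bigr do rewrite horner_exp hornerXsubC sub0r /roots_of opprK -exprM.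
rewrite !prodrXr => /tvarX_inj eq_exp.
exists (fun j => nth 0%N E (pi j)); rewrite (big_nth 0%N) size_E big_mkord eq_exp.
by apply: eq_bigr => j _; rewrite mulnC.
Qed.

Definition taus : seq K := [seq tvar ^+ i | i <- iota 0 (#|pattern| * C).+1].

Definition orbit_equations : seq {mpoly K[q]} :=
  [seq coef_form k | k <- iota C.+1 (q.-1 - C)] ++
  (coef_form C - 1) :: [seq pattern_form tau | tau <- taus].

Hypothesis C_lt : (2 * C < q)%N.

Lemma C_lt_qpred : (C < q.-1)%N.
Proof. by have := q_gt1 pL r_gt0; lia. Qed.

Lemma Bset_orbit_equations n : (forall j, (0 < c j)%N) -> Bset q c n ->
  forall f, f \in orbit_equations -> f.@[orbit n] = 0.
Proof.
move=> c_gt0 [ns ->] f; have C_lt' := C_lt_qpred; set E := pattern_exponents ns.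
have size_E : size E = C := size_pattern_exponents ns.
rewrite -sum_pattern_exponents -/E mem_cat inE.
case/orP=> [/mapP[k k_in ->] | /orP[/eqP -> | /mapP[tau _ ->]]].
- move: k_in; rewrite mem_iota => k_in.
  rewrite coef_form_orbit_exp_poly ?size_E ?nth_default // ?size_exp_poly ?size_E; lia.
- rewrite mevalB meval1 coef_form_orbit_exp_poly ?size_E //; last exact: ltnW.
  have -> : (exp_poly E)`_C = lead_coef (exp_poly E) by rewrite lead_coefE size_exp_poly size_E.
  by rewrite (monicP (monic_exp_poly E)) subrr.
rewrite pattern_form_orbit // pattern_poly_meval.
have index_lt j : (index (ns j) E < C)%N by rewrite -size_E index_mem mem_pattern_exponents.
rewrite (bigD1 [ffun j => Ordinal (index_lt j)]) //=; apply/eqP; rewrite mulf_eq0 subr_eq0.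
apply/orP; left; apply/eqP.
have prod_roots : \prod_(i < C) (tau - roots_of E i) = \prod_(e <- E) (tau + tvar ^+ (q ^ e)).
  by rewrite [RHS](big_nth 0%N) size_E big_mkord; apply: eq_bigr => i _; rewrite /roots_of opprK.
rewrite prod_roots prod_pattern_exponents; apply: eq_bigr => j _.
by rewrite ffunE /roots_of /= nth_index ?mem_pattern_exponents // opprK.
Qed.

Lemma size_digit_exponents_orbit n :
  (forall k, (C < k <= q.-1)%N -> (coef_form k).@[orbit n] = 0) ->
  (coef_form C).@[orbit n] = 1 -> size (digit_exponents (digits q n)) = C.
Proof.
move=> coef_high coef_C; have C_lt' := C_lt_qpred; have q_gt1 := q_gt1 pL r_gt0.
set E := digit_exponents (digits q n).
have size_E_le : (size E <= C)%N.
  rewrite leqNgt size_digit_exponents; apply/negP => C_lt_E.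
  by have [k /coef_high ->] := coef_form_orbit_neq0 C_lt C_lt_E; rewrite eqxx.
apply/eqP; rewrite eqn_leq size_E_le leqNgt; apply/negP => lt_EC.
move: coef_C; rewrite -[n](digitsK q_gt1) -sum_digit_exponents -/E.
rewrite coef_form_orbit_exp_poly ?nth_default ?size_exp_poly //; try lia.
by move/eqP; rewrite eq_sym oner_eq0.
Qed.

Lemma orbit_equations_Bset n :
  (forall f, f \in orbit_equations -> f.@[orbit n] = 0) -> Bset q c n.
Proof.
move=> eqs; have C_lt' := C_lt_qpred; have q_gt1 := q_gt1 pL r_gt0.
have size_E : size (digit_exponents (digits q n)) = C.
  apply: size_digit_exponents_orbit => [k k_in|].
    apply: eqs; rewrite mem_cat; apply/orP; left.
    by apply/mapP; exists k => //; rewrite mem_iota; lia.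
  apply/eqP; rewrite -subr_eq0 -(meval1 (orbit n)) -mevalB; apply/eqP; apply: eqs.
  by rewrite mem_cat inE eqxx orbT.
rewrite -[n](digitsK q_gt1) -sum_digit_exponents in eqs *.
set E := digit_exponents _ in size_E eqs *.
have pattern_roots tau : tau \in taus -> (pattern_poly c C tau).@[roots_of E] = 0.
  move=> tau_in; rewrite -pattern_form_orbit //; apply: eqs.
  by rewrite mem_cat inE; apply/orP; right; apply/orP; right; apply/mapP; exists tau.
have uniq_taus : uniq taus by rewrite map_inj_uniq ?iota_uniq //; exact: tvarX_inj.
have size_taus : (#|pattern| * C < size taus)%N by rewrite size_map size_iota.
have [pi eq_pi] := pattern_poly_roots sum_c uniq_taus size_taus pattern_roots.
exact: Bset_pattern_identity eq_pi.
Qed.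

End TorusOrbit.

Lemma DML_Bset (L : fieldType) (p r : nat) (A : seq L) (m : nat) (c : 'I_m -> nat) :
  p \in [pchar L] -> (0 < r)%N -> Fq_enum (p ^ r) A ->
  (2 * \sum_(j < m) c j < p ^ r)%N -> (forall j, (0 < c j)%N) ->
  DML_set_over_torus {fraction {poly L}} (p ^ r) (Bset (p ^ r) c).
Proof.
move=> pL r_gt0 A_Fq C_lt c_gt0.
exists (orbit_step A), (fun=> 0%MM), (fun=> 1), (orbit_equations p r A c (\sum_(j < m) c j)).
split; first exact: orbit_step_endo.
split=> [i | n]; first exact: oner_neq0.
split=> [Bn f f_in | eqs].
  rewrite (meval_eq _ (iter_orbit_step A n)).
  exact: (Bset_orbit_equations pL r_gt0 A_Fq (erefl _) C_lt c_gt0 Bn).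
apply: (orbit_equations_Bset pL r_gt0 A_Fq (erefl _) C_lt) => f f_in.
by rewrite -(meval_eq _ (iter_orbit_step A n)); exact: eqs.
Qed.

Theorem corollary3p3 (p : nat) (hp : prime p) (r : nat) (hr : (0 < r)%N)
  (L : closedFieldType) (hL : is_alg_closure_Fp p L)
  (m : nat) (hm : (0 < m)%N) (c : 'I_m -> nat) (hc : forall j, (0 < c j)%N)
  (hsum : (2 * \sum_(j < m) c j < p ^ r)%N) :
  DML_set_over_split_torus {fraction {poly L}} (Bset (p ^ r) c).
Proof.
have [pL _] := hL.
have [A A_Fq] := exists_Fq_enum pL hr.
exists (p ^ r)%N; split; first by rewrite expn_gt0 prime_gt0.
exact: (DML_Bset pL hr A_Fq hsum hc).
Qed.
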